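(* Let $\rho\in(0,1)$ and $k\ge1$ an integer. Let $\beta_\rho=\frac{\sqrt{1+\rho}-\sqrt{1-\rho}}{\sqrt{1+\rho}+\sqrt{1-\rho}}$, $\rho_1=\frac{2\beta_\rho^k}{1+\beta_\rho^{2k}}$ and $$C_1=\frac{\rho_1}{2\rho^k}\Big(\big(1-\sqrt{1+\rho^2}\big)^k+\big(1+\sqrt{1+\rho^2}\big)^k\Big).$$ Then $\tilde\rho(C_1)\le\rho_1$.
   Context: $\mathbb{R}_k[X]$ denotes real polynomials of degree at most $k$, and $\|p\|_1$ is the sum of absolute values of the coefficients of $p$. For $C\ge1$, $\tilde\rho(C)=\min\{\max_{x\in[0,\rho]}|p(x)| : p\in\mathbb{R}_k[X],\ p(1)=1,\ \|p\|_1\le C\}$. *)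

From HB Require Import structures.
From mathcomp Require Import all_boot all_order all_algebra.
From mathcomp Require Import all_classical all_reals.
Set Implicit Arguments. Unset Strict Implicit. Unset Printing Implicit Defensive.
Import Order.TTheory GRing.Theory Num.Theory.
Local Open Scope ring_scope.
Local Open Scope classical_set_scope.

Definition norm1 (R : realType) (p : {poly R}) : R :=
  \sum_(i < size p) `|p`_i|.

(* max_{x in [0,rho]} |p(x)| (a max, attained by continuity; written as sup) *)
Definition supnorm (R : realType) (rho : R) (p : {poly R}) : R :=
  sup [set `|p.[x]| | x in `[0, rho]].

Definition admissible (R : realType) (k : nat) (C : R) (p : {poly R}) : Prop :=
  (size p <= k.+1)%N /\ p.[1] = 1 /\ norm1 p <= C.

Definition rho_tilde (R : realType) (k : nat) (rho C : R) : R :=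
  inf [set supnorm rho p | p in admissible k C].

From HB Require Import structures.
From mathcomp Require Import all_boot all_order all_algebra.
From mathcomp Require Import all_classical all_reals.
From mathcomp Require Import ring lra zify.
Import Order.TTheory GRing.Theory Num.Theory.
Local Open Scope ring_scope.
Set Implicit Arguments. Unset Strict Implicit.

(* The witness is the rescaled Chebyshev polynomial p(x) = T_k(x/rho) / T_k(1/rho).
   Since |T_k| <= 1 on [0, 1], max_[0,rho] |p| <= 1 / T_k(1/rho), and because
   beta + 1/beta = 2/rho, Binet's formula gives T_k(1/rho) = (beta^-k + beta^k) / 2,
   i.e. 1 / T_k(1/rho) = rho_1.  By the three-term recurrence and submultiplicativity
   of the l1 norm, ||T_k(x/rho)||_1 is at most s_k, where s_(n+2) = (2/rho) s_(n+1) + s_n;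
   the roots of z^2 - (2/rho) z - 1 are (1 +- sqrt(1 + rho^2)) / rho, so Binet's formula
   again gives ||p||_1 <= s_k / T_k(1/rho) = C_1. *)

Lemma nat_ind2 (P : nat -> Prop) :
  P 0%N -> P 1%N -> (forall n, P n -> P n.+1 -> P n.+2) -> forall n, P n.
Proof.
move=> P0 P1 PS n; suff [] : P n /\ P n.+1 by [].
by elim: n => [|n [Pn Pn1]]; split=> //; apply: PS.
Qed.

(* [cheb a (-1) n] is the Chebyshev polynomial T_n evaluated at [a]; the variant
   [b = 1] bounds the l1 norm of its coefficients (norm1_cheb). *)
Fixpoint cheb (T : pzRingType) (a b : T) n : T :=
  match n with
  | 0 => 1
  | 1 => a
  | (m.+1 as n').+1 => 2 * a * cheb a b n' + b * cheb a b m
  end.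

Section Chebyshev.
Variable T : pzRingType.
Implicit Types a b : T.

Lemma chebSS a b n :
  cheb a b n.+2 = 2 * a * cheb a b n.+1 + b * cheb a b n.
Proof. by []. Qed.

Lemma rmorph_cheb (U : pzRingType) (f : {rmorphism T -> U}) a b n :
  f (cheb a b n) = cheb (f a) (f b) n.
Proof.
elim/nat_ind2: n => [|//|n IH0 IH1]; first exact: rmorph1.
by rewrite !chebSS rmorphD !rmorphM rmorph_nat IH0 IH1.
Qed.

End Chebyshev.

Lemma cheb_binet (T : comPzRingType) (a b u v : T) n :
  u + v = 2 * a -> u * v = - b -> 2 * cheb a b n = u ^+ n + v ^+ n.
Proof.
move=> huv hb; have -> : b = - (u * v) by rewrite hb opprK.
elim/nat_ind2: n => [|/=|n IH0 IH1]; [by rewrite mulr1 | by rewrite -huv |].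
have -> : 2 * cheb a (- (u * v)) n.+2 =
    (2 * a) * (2 * cheb a (- (u * v)) n.+1) - u * v * (2 * cheb a (- (u * v)) n).
  by rewrite chebSS; ring.
by rewrite IH0 IH1 -huv !exprS; ring.
Qed.

Lemma cheb_cassini (T : comPzRingType) (y : T) n :
  cheb y (-1) n.+1 ^+ 2 + cheb y (-1) n ^+ 2 - 2 * y * cheb y (-1) n.+1 * cheb y (-1) n
  = 1 - y ^+ 2.
Proof. by elim: n => [|n IH]; [rewrite /=; ring | rewrite chebSS -IH; ring]. Qed.

Section RealChebyshev.
Variable R : realFieldType.
Implicit Types y : R.

Lemma cheb_normr_le1 y n : `|y| <= 1 -> `|cheb y (-1) n| <= 1.
Proof.
rewrite le_eqVlt => /orP[/eqP y1 | y_lt1].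
  have yy : y * y = - (-1) by rewrite opprK -expr2 -real_normK ?num_real // y1 expr1n.
  have two_y : y + y = 2 * y by rewrite mulr_natl mulr2n.
  have : 2 * cheb y (-1) n = 2 * y ^+ n by rewrite (cheb_binet n two_y yy) mulr_natl mulr2n.
  have two0 : 2 != 0 :> R by rewrite pnatr_eq0.
  by move=> /(mulfI two0) ->; rewrite normrX y1 expr1n.
have cassini := cheb_cassini y n.
(* (1 - y^2) (1 - T_n^2) is a square by the Cassini identity, and 1 - y^2 > 0. *)
have sq : (1 - y ^+ 2) * (1 - cheb y (-1) n ^+ 2)
          = (cheb y (-1) n.+1 - y * cheb y (-1) n) ^+ 2.
  transitivity (cheb y (-1) n.+1 ^+ 2 + cheb y (-1) n ^+ 2
      - 2 * y * cheb y (-1) n.+1 * cheb y (-1) n - cheb y (-1) n ^+ 2 * (1 - y ^+ 2)).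
    by rewrite cassini; ring.
  by ring.
have y2_lt1 : y ^+ 2 < 1 by rewrite -real_normK ?num_real // expr_lt1.
rewrite -(ler_pXn2r (n := 2)) ?nnegrE // expr1n real_normK ?num_real //.
have : 0 <= (1 - y ^+ 2) * (1 - cheb y (-1) n ^+ 2) by rewrite sq sqr_ge0.
by rewrite pmulr_rge0 ?subr_gt0 // subr_ge0.
Qed.

Lemma cheb_ge1 y n : 1 <= y -> 1 <= cheb y (-1) n.
Proof.
move=> y1; suff /andP[] : 1 <= cheb y (-1) n <= cheb y (-1) n.+1 by [].
elim: n => [|n /andP[c1 c12]]; first by rewrite lexx.
by rewrite (le_trans c1 c12) chebSS; nra.
Qed.

End RealChebyshev.

Section L1Norm.
Variable R : realType.
Implicit Types (p q : {poly R}) (c : R).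

Lemma norm1_widen p N : (size p <= N)%N -> norm1 p = \sum_(i < N) `|p`_i|.
Proof.
move=> hN; rewrite /norm1 (big_ord_widen N (fun i => `|p`_i|) hN) big_mkcond /=.
apply: eq_bigr => i _; case: ifP => // /negbT; rewrite -leqNgt => h.
by rewrite nth_default // normr0.
Qed.

Lemma norm1_ge0 p : 0 <= norm1 p.
Proof. exact: sumr_ge0. Qed.

Lemma norm1C c : norm1 c%:P = `|c|.
Proof. by rewrite (@norm1_widen _ 1) ?size_polyC_leq1 // big_ord1 coefC. Qed.

Lemma norm1X : norm1 'X = 1 :> R.
Proof.
by rewrite /norm1 size_polyX !big_ord_recl big_ord0 !coefX /= normr0 normr1 add0r addr0.
Qed.

Lemma norm1D p q : norm1 (p + q) <= norm1 p + norm1 q.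
Proof.
pose N := maxn (size p) (size q).
rewrite (@norm1_widen (p + q) N); last exact: leq_trans (size_polyD _ _) _.
rewrite (@norm1_widen p N) ?leq_maxl // (@norm1_widen q N) ?leq_maxr //.
by rewrite -big_split /=; apply: ler_sum => i _; rewrite coefD ler_normD.
Qed.

Lemma norm1Z c p : norm1 (c *: p) = `|c| * norm1 p.
Proof.
rewrite (@norm1_widen (c *: p) (size p)) ?size_scale_leq // /norm1 mulr_sumr.
by apply: eq_bigr => i _; rewrite coefZ normrM.
Qed.

Lemma norm1_MXaddC p c : norm1 (p * 'X + c%:P) = norm1 p + `|c|.
Proof.
rewrite (@norm1_widen _ (size p).+1); last by rewrite size_MXaddC; case: ifP.
rewrite big_ord_recl addrC coefD coefMX coefC /= add0r; congr (_ + _).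
by apply: eq_bigr => i _; rewrite coefD coefMX coefC /= addr0.
Qed.

Lemma norm1M p q : norm1 (p * q) <= norm1 p * norm1 q.
Proof.
elim/poly_ind: p => [|p c IH]; first by rewrite mul0r /norm1 size_poly0 !big_ord0 mul0r.
rewrite mulrDl mulrAC mul_polyC norm1_MXaddC mulrDl.
apply: le_trans (norm1D _ _) _.
by rewrite -[_ * 'X]addr0 -polyC0 norm1_MXaddC normr0 addr0 norm1Z lerD2r.
Qed.

Lemma norm1_cheb (a b : {poly R}) n : norm1 (cheb a b n) <= cheb (norm1 a) (norm1 b) n.
Proof.
elim/nat_ind2: n => [|//|n IH0 IH1]; first by rewrite /= -polyC1 norm1C normr1.
rewrite !chebSS; apply: le_trans (norm1D _ _) _; apply: lerD.
  apply: le_trans (norm1M _ _) _.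
  apply: ler_pM; rewrite ?norm1_ge0 //.
  by apply: le_trans (norm1M _ _) _; rewrite -polyC_natr norm1C normr_nat.
apply: le_trans (norm1M _ _) _.
by apply: ler_wpM2l; rewrite ?norm1_ge0.
Qed.

End L1Norm.

Lemma size_cheb (R : nzRingType) (a b : {poly R}) n :
  (size a <= 2)%N -> (size b <= 1)%N -> (size (cheb a b n) <= n.+1)%N.
Proof.
move=> sa sb; elim/nat_ind2: n => [|//|n IH0 IH1]; first by rewrite size_poly1.
have sizeM (p q : {poly R}) i j :
    (size p <= i.+1)%N -> (size q <= j.+1)%N -> (size (p * q)%R <= i + j.+1)%N.
  by move=> sp sq; apply: leq_trans (size_polyMleq p q) _; lia.
have s2 : (size (2 : {poly R})%R <= 1)%N by rewrite -polyC_natr size_polyC_leq1.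
rewrite chebSS; apply: leq_trans (size_polyD _ _) _; rewrite geq_max; apply/andP; split.
  exact: sizeM _ _ 1 n.+1 (sizeM _ _ 0 1 s2 sa) IH1.
by apply: leq_trans (sizeM _ _ 0 n sb IH0) _; lia.
Qed.

Lemma horner_cheb (R : comNzRingType) (a b : {poly R}) x n :
  (cheb a b n).[x] = cheb a.[x] b.[x] n.
Proof. by rewrite -horner_evalE rmorph_cheb. Qed.

Section RhoTilde.
Variable R : realType.
Implicit Types (rho C M : R) (p : {poly R}).

Lemma supnorm_ge0 rho p : 0 <= rho -> 0 <= supnorm rho p.
Proof.
move=> rho0; rewrite /supnorm; set E := [set _ | _ in _]%classic.
have [hs|hs] := pselect (has_sup E); last by rewrite sup_out.
apply: le_trans (normr_ge0 p.[0]) _; apply: ub_le_sup; first by case: hs.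
by exists 0 => //=; rewrite in_itv /= lexx.
Qed.

Lemma supnorm_le rho M p :
  0 <= rho -> (forall x, 0 <= x <= rho -> `|p.[x]| <= M) -> supnorm rho p <= M.
Proof.
move=> rho0 bound; apply: ge_sup; first by exists `|p.[0]|, 0 => //=; rewrite in_itv /= lexx.
by move=> _ [x /= x_in <-]; apply: bound; rewrite in_itv /= in x_in.
Qed.

Lemma rho_tilde_le_supnorm k rho C p :
  0 <= rho -> admissible k C p -> rho_tilde k rho C <= supnorm rho p.
Proof.
move=> rho0 adm; apply: (ge_inf (E := [set supnorm rho q | q in admissible k C]%classic)).
  by exists 0 => _ [q _ <-]; apply: supnorm_ge0.
by exists p.
Qed.

Lemma rho_tilde_cheb k rho : 0 < rho <= 1 ->
  rho_tilde k rho (cheb rho^-1 1 k / cheb rho^-1 (-1) k) <= (cheb rho^-1 (-1) k)^-1.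
Proof.
case/andP=> rho_gt0 rho_le1; set c := rho^-1; set t := cheb c (-1) k.
set T := cheb (c *: 'X) (-1) k.
have Tx x : T.[x] = cheb (c * x) (-1) k by rewrite horner_cheb hornerZ hornerX hornerN hornerC.
have c_ge1 : 1 <= c by rewrite invf_ge1.
have t_gt0 : 0 < t by apply: lt_le_trans (cheb_ge1 k c_ge1).
have t_inv_ge0 : 0 <= t^-1 by rewrite invr_ge0 ltW.
apply: le_trans (rho_tilde_le_supnorm (p := t^-1 *: T) (ltW rho_gt0) _) _.
  split.
    apply: leq_trans (size_scale_leq _ _) (size_cheb _ _ _).
      by rewrite (leq_trans (size_scale_leq _ _)) ?size_polyX.
    by rewrite size_polyN size_poly1.
  split; first by rewrite hornerZ Tx mulr1 mulVf ?gt_eqF.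
  rewrite norm1Z ger0_norm // mulrC ler_pM2r ?invr_gt0 //.
  apply: le_trans (norm1_cheb _ _ _) _.
  rewrite norm1Z norm1X -polyC1 -polyCN norm1C normrN normr1 mulr1 ger0_norm //.
  exact: le_trans ler01 c_ge1.
apply: supnorm_le (ltW rho_gt0) _ => x /andP[x_ge0 x_le].
rewrite hornerZ normrM ger0_norm // -[leRHS]mulr1 ler_wpM2l // Tx cheb_normr_le1 //.
by rewrite ger0_norm ?mulr_ge0 ?invr_ge0 ?(ltW rho_gt0) // /c mulrC ler_pdivrMr // mul1r.
Qed.

End RhoTilde.

Section JoukowskiRoot.
Variable R : rcfType.
Implicit Types rho : R.

Definition joukowski_root rho :=
  (Num.sqrt (1 + rho) - Num.sqrt (1 - rho)) / (Num.sqrt (1 + rho) + Num.sqrt (1 - rho)).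

Lemma joukowski_root_gt0 rho : 0 < rho <= 1 -> 0 < joukowski_root rho.
Proof.
case/andP=> rho_gt0 rho_le1; have := sqrtr_ge0 (1 - rho).
have : Num.sqrt (1 - rho) < Num.sqrt (1 + rho) by rewrite ltr_sqrt; lra.
by move=> *; rewrite divr_gt0 ?subr_gt0 //; lra.
Qed.

Lemma joukowski_root_addV rho :
  0 < rho <= 1 -> (joukowski_root rho)^-1 + joukowski_root rho = 2 / rho.
Proof.
case/andP=> rho_gt0 rho_le1; rewrite /joukowski_root invf_div.
set a := Num.sqrt (1 + rho); set b := Num.sqrt (1 - rho).
have a2 : a ^+ 2 = 1 + rho by rewrite sqr_sqrtr //; lra.
have b2 : b ^+ 2 = 1 - rho by rewrite sqr_sqrtr //; lra.
have b_lt_a : b < a by rewrite ltr_sqrt; lra.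
have b_ge0 : 0 <= b by exact: sqrtr_ge0.
have amb : a - b != 0 by rewrite subr_eq0 gt_eqF.
have apb : a + b != 0 by apply/lt0r_neq0/(le_lt_trans b_ge0); lra.
transitivity (2 * (a ^+ 2 + b ^+ 2) / (a ^+ 2 - b ^+ 2)).
  by field; rewrite amb apb a2 b2 !andbT; apply/lt0r_neq0; lra.
by rewrite a2 b2; field; rewrite gt_eqF //=; apply/lt0r_neq0; lra.
Qed.

End JoukowskiRoot.

Theorem proposition4 (R : realType) (rho : R) (k : nat)
  (hrho0 : 0 < rho) (hrho1 : rho < 1) (hk : (1 <= k)%N) :
  let beta := (Num.sqrt (1 + rho) - Num.sqrt (1 - rho)) /
              (Num.sqrt (1 + rho) + Num.sqrt (1 - rho)) in
  let rho1 := 2 * beta ^+ k / (1 + beta ^+ (2 * k)) in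
  let C1 := rho1 / (2 * rho ^+ k) *
            ((1 - Num.sqrt (1 + rho ^+ 2)) ^+ k + (1 + Num.sqrt (1 + rho ^+ 2)) ^+ k) in
  rho_tilde k rho C1 <= rho1.
Proof.
cbv zeta; set beta := (Num.sqrt (1 + rho) - _) / _; set rho1 := 2 * beta ^+ k / _.
set S := Num.sqrt (1 + rho ^+ 2).
have rho01 : 0 < rho <= 1 by rewrite hrho0 ltW.
have beta_gt0 : 0 < beta := joukowski_root_gt0 rho01.
have rho_neq0 : rho != 0 by rewrite gt_eqF.
have two_neq0 : 2 != 0 :> R by rewrite pnatr_eq0.
have binet_T : 2 * cheb rho^-1 (-1) k = beta^-1 ^+ k + beta ^+ k.
  by apply: cheb_binet; rewrite ?joukowski_root_addV ?mulVf ?opprK ?gt_eqF.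
have S2 : S ^+ 2 = 1 + rho ^+ 2 by rewrite sqr_sqrtr // addr_ge0 ?sqr_ge0.
have binet_s : 2 * cheb rho^-1 1 k = ((1 + S) / rho) ^+ k + ((1 - S) / rho) ^+ k.
  apply: cheb_binet; first by field.
  transitivity ((1 - S ^+ 2) / rho ^+ 2); first by field.
  by rewrite S2; field.
have -> : rho1 = (cheb rho^-1 (-1) k)^-1.
  rewrite /rho1 -[cheb rho^-1 (-1) k](mulKf two_neq0) binet_T mulnC exprM exprVn.
  by field; rewrite !gt_eqF ?addr_gt0 ?mulr_gt0 ?exprn_gt0.
have t_gt0 : 0 < cheb rho^-1 (-1) k.
  by apply: lt_le_trans (cheb_ge1 k _); rewrite ?invf_ge1 ?ltW.
have -> : (cheb rho^-1 (-1) k)^-1 / (2 * rho ^+ k) * ((1 - S) ^+ k + (1 + S) ^+ k)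
    = cheb rho^-1 1 k / cheb rho^-1 (-1) k.
  rewrite -[cheb rho^-1 1 k](mulKf two_neq0) binet_s !expr_div_n.
  by field; rewrite gt_eqF // expf_neq0.
exact: rho_tilde_cheb.
Qed.
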